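(* A $\mathbb{B}$-topological space $(X,\tau)$ is regular if and only if both topological spaces $(X,\tau[tt])$ and $(X,\tau[ff])$ are regular. In particular, for every topological space $(X,\mathcal{T})$, the $\mathbb{B}$-topological space $\omega(X,\mathcal{T})$ is regular if and only if $(X,\mathcal{T})$ is regular.
   Context: $\mathbb{B}=\{0,1,tt,ff\}$ is the four-element Boolean algebra with bottom $0$, top $1$, and $tt,ff$ incomparable complements; $\neg$ its complement. A $\mathbb{B}$-topology on $X$ is $\tau\subseteq\mathbb{B}^X$ containing all constant maps and closed under arbitrary pointwise joins and finite pointwise meets; $\mu$ is closed if $\neg\mu\in\tau$; $\overline{\mu}$ is the pointwise meet of all closed sets $\ge\mu$. $\tau[b]=\{\lambda[b]:\lambda\in\tau\}$ with $\lambda[b]=\{x:\lambda(x)\ge b\}$. $(X,\tau)$ is regular if for every $\lambda\in\tau$, $\lambda=\bigvee\{\mu\in\tau:\overline{\mu}\le\lambda\}$. For a topological space $(X,\mathcal{T})$, $\omega(\mathcal{T})=\{\lambda\in\mathbb{B}^X:\lambda[tt]\in\mathcal{T},\lambda[ff]\in\mathcal{T}\}$ and $\omega(X,\mathcal{T})=(X,\omega(\mathcal{T}))$. A topological space is regular if every neighbourhood of a point contains a closed neighbourhood of that point (no $T_1$ assumption). *)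

Inductive B4 : Type := B0 | B1 | Btt | Bff.

Definition leB (a b : B4) : Prop :=
  a = B0 \/ b = B1 \/ a = b.

Definition negB (a : B4) : B4 :=
  match a with B0 => B1 | B1 => B0 | Btt => Bff | Bff => Btt end.

Definition meetB (a b : B4) : B4 :=
  match a, b with
  | B1, c => c
  | c, B1 => c
  | Btt, Btt => Btt
  | Bff, Bff => Bff
  | _, _ => B0
  end.

Definition isLUB (A : B4 -> Prop) (b : B4) : Prop :=
  (forall a, A a -> leB a b) /\ (forall c, (forall a, A a -> leB a c) -> leB b c).
Definition isGLB (A : B4 -> Prop) (b : B4) : Prop :=
  (forall a, A a -> leB b a) /\ (forall c, (forall a, A a -> leB c a) -> leB c b).

Definition leF {X : Type} (f g : X -> B4) : Prop := forall x, leB (f x) (g x).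

Definition is_join {X : Type} (S : (X -> B4) -> Prop) (mu : X -> B4) : Prop :=
  forall x, isLUB (fun a => exists l, S l /\ l x = a) (mu x).

Definition is_Btopology {X : Type} (tau : (X -> B4) -> Prop) : Prop :=
  (forall b : B4, tau (fun _ => b)) /\
  (forall S mu, (forall l, S l -> tau l) -> is_join S mu -> tau mu) /\
  (forall l m, tau l -> tau m -> tau (fun x => meetB (l x) (m x))).

Definition Bclosed {X : Type} (tau : (X -> B4) -> Prop) (mu : X -> B4) : Prop :=
  tau (fun x => negB (mu x)).

Definition is_Bclosure {X : Type} (tau : (X -> B4) -> Prop) (mu c : X -> B4) : Prop :=
  forall x, isGLB (fun a => exists nu, Bclosed tau nu /\ leF mu nu /\ nu x = a) (c x).

Definition Bregular {X : Type} (tau : (X -> B4) -> Prop) : Prop :=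
  forall l, tau l ->
    is_join (fun m => tau m /\ exists c, is_Bclosure tau m c /\ leF c l) l.

Definition level {X : Type} (l : X -> B4) (b : B4) : X -> Prop :=
  fun x => leB b (l x).

(** tau[b] = { lambda[b] | lambda in tau } (as a predicate on subsets,
    up to extensional equality of subsets). *)
Definition cut {X : Type} (tau : (X -> B4) -> Prop) (b : B4) : (X -> Prop) -> Prop :=
  fun U => exists l, tau l /\ forall x, U x <-> level l b x.

Definition is_topology {X : Type} (T : (X -> Prop) -> Prop) : Prop :=
  T (fun _ => False) /\ T (fun _ => True) /\
  (forall F : (X -> Prop) -> Prop, (forall U, F U -> T U) ->
     T (fun x => exists U, F U /\ U x)) /\
  (forall U V, T U -> T V -> T (fun x => U x /\ V x)).

Definition nbhd {X : Type} (T : (X -> Prop) -> Prop) (N : X -> Prop) (x : X) : Prop :=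
  exists V, T V /\ V x /\ forall y, V y -> N y.

(** Regular topological space (no T1 assumption): every neighbourhood of a
    point contains a closed neighbourhood of that point. *)
Definition Tregular {X : Type} (T : (X -> Prop) -> Prop) : Prop :=
  forall (x : X) (N : X -> Prop), nbhd T N x ->
    exists C, T (fun y => ~ C y) /\ nbhd T C x /\ forall y, C y -> N y.

Definition omega {X : Type} (T : (X -> Prop) -> Prop) : (X -> B4) -> Prop :=
  fun l => T (level l Btt) /\ T (level l Bff).

From Stdlib Require Import Classical ClassicalEpsilon FunctionalExtensionality PropExtensionality.

(* An element of B is determined by the atoms tt, ff below it, and joins, meets, complements
   and closures in B^X are computed atom by atom; so for an atom b the level map
   λ ↦ λ[b] sends a τ-closure to a τ[b]-closed set, which gives regularity of τ[b]
   from that of τ.  Conversely, if x ∈ λ[b] and τ[b] is regular, choose k ∈ τ with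
   x ∈ k[b] and k[b] inside a τ[b]-closed set C ⊆ λ[b]; the open set k ∧ b (b the
   constant map) has its closure below λ: its b-level lies in C and its ¬b-level is empty.
   Finally both level topologies of ω(T) are T itself. *)

Ltac leB_cases := unfold leB in *; intuition (try discriminate; auto).

Definition atom (b : B4) : Prop := b = Btt \/ b = Bff.

Lemma atom_tt : atom Btt.
Proof. now left. Qed.

Lemma atom_ff : atom Bff.
Proof. now right. Qed.

Lemma negB_involutive a : negB (negB a) = a.
Proof. now destruct a. Qed.

Lemma leB_refl a : leB a a.
Proof. leB_cases. Qed.

Lemma leB_trans a c d : leB a c -> leB c d -> leB a d.
Proof. destruct a, c, d; leB_cases. Qed.

Lemma leB_atoms a c : leB a c <-> forall b, atom b -> leB b a -> leB b c.
Proof.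
  split; [intros; eapply leB_trans; eauto |].
  intro H; pose proof (H _ atom_tt); pose proof (H _ atom_ff).
  destruct a, c; leB_cases.
Qed.

Lemma leB_meetB_atom b a c : atom b -> (leB b (meetB a c) <-> leB b a /\ leB b c).
Proof. intros [-> | ->]; destruct a, c; simpl; leB_cases. Qed.

Lemma leB_negB_atom b a : atom b -> (leB b (negB a) <-> ~ leB b a).
Proof. intros [-> | ->]; destruct a; simpl; leB_cases. Qed.

Lemma leB_negB_of_not_leB b a : atom b -> ~ leB b a -> leB a (negB b).
Proof. intros [-> | ->]; destruct a; simpl; leB_cases. Qed.

Lemma not_leB_negB_atom b : atom b -> ~ leB b (negB b).
Proof. intros [-> | ->]; simpl; leB_cases. Qed.

Lemma leB_meetB_r a c : leB (meetB a c) c.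
Proof. destruct a, c; simpl; leB_cases. Qed.

Lemma isLUB_atoms A m :
  isLUB A m <-> forall b, atom b -> (leB b m <-> exists a, A a /\ leB b a).
Proof.
  split.
  - intros [Hub Hleast] b Hb; split.
    + intro Hbm; apply NNPP; intro Hnone.
      assert (Hm : leB m (negB b)).
      { apply Hleast; intros a Ha; apply leB_negB_of_not_leB; eauto. }
      exact (not_leB_negB_atom b Hb (leB_trans _ _ _ Hbm Hm)).
    + intros [a [Ha Hba]]; eapply leB_trans; eauto.
  - intro H; split.
    + intros a Ha; apply leB_atoms; intros b Hb Hba; apply H; eauto.
    + intros c Hc; apply leB_atoms; intros b Hb Hbm.
      destruct (proj1 (H b Hb) Hbm) as [a [Ha Hba]]; eapply leB_trans; eauto.
Qed.

Lemma isGLB_atoms A m :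
  isGLB A m <-> forall b, atom b -> (leB b m <-> forall a, A a -> leB b a).
Proof.
  split.
  - intros [Hlb Hgreatest] b Hb; split.
    + intros Hbm a Ha; exact (leB_trans _ _ _ Hbm (Hlb a Ha)).
    + intro H; apply Hgreatest; exact H.
  - intro H; split.
    + intros a Ha; apply leB_atoms; intros b Hb Hbm; eapply H; eauto.
    + intros c Hc; apply leB_atoms; intros b Hb Hbc; apply H; [exact Hb |].
      intros a Ha; eapply leB_trans; eauto.
Qed.

Definition B4_of_atoms (p q : Prop) : B4 :=
  if excluded_middle_informative p then
    (if excluded_middle_informative q then B1 else Btt)
  else (if excluded_middle_informative q then Bff else B0).

Lemma leB_tt_B4_of_atoms p q : leB Btt (B4_of_atoms p q) <-> p.
Proof.
  unfold B4_of_atoms.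
  destruct (excluded_middle_informative p), (excluded_middle_informative q); leB_cases.
Qed.

Lemma leB_ff_B4_of_atoms p q : leB Bff (B4_of_atoms p q) <-> q.
Proof.
  unfold B4_of_atoms.
  destruct (excluded_middle_informative p), (excluded_middle_informative q); leB_cases.
Qed.

Section Levels.
Context {X : Type}.

Lemma pred_ext (U V : X -> Prop) : (forall x, U x <-> V x) -> U = V.
Proof.
  intro H; apply functional_extensionality; intro x; apply propositional_extensionality, H.
Qed.

Lemma level_join (S : (X -> B4) -> Prop) mu b x :
  atom b -> is_join S mu -> (leB b (mu x) <-> exists l, S l /\ leB b (l x)).
Proof.
  intros Hb J; rewrite (proj1 (isLUB_atoms _ _) (J x) b Hb); split.
  - intros [a [[l [Hl <-]] Hba]]; eauto.
  - intros [l [Hl Hbl]]; eauto.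
Qed.

Lemma cut_level (tau : (X -> B4) -> Prop) l b : tau l -> cut tau b (level l b).
Proof. intro Hl; exists l; split; [exact Hl | reflexivity]. Qed.

Variable tau : (X -> B4) -> Prop.

Definition Bclosure (m : X -> B4) (x : X) : B4 :=
  B4_of_atoms (forall nu, Bclosed tau nu -> leF m nu -> leB Btt (nu x))
              (forall nu, Bclosed tau nu -> leF m nu -> leB Bff (nu x)).

Lemma is_Bclosure_atoms m c x b : is_Bclosure tau m c -> atom b ->
  (leB b (c x) <-> forall nu, Bclosed tau nu -> leF m nu -> leB b (nu x)).
Proof.
  intros Hc Hb; rewrite (proj1 (isGLB_atoms _ _) (Hc x) b Hb); split.
  - intros H nu Hnu Hle; apply H; eauto.
  - intros H a [nu [Hnu [Hle <-]]]; auto.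
Qed.

Lemma Bclosure_spec m : is_Bclosure tau m (Bclosure m).
Proof.
  intro x; apply isGLB_atoms; intros b [-> | ->]; unfold Bclosure;
    [rewrite leB_tt_B4_of_atoms | rewrite leB_ff_B4_of_atoms]; split;
    solve [intros H a [nu [Hnu [Hle <-]]]; auto | intros H nu Hnu Hle; apply H; eauto].
Qed.

Lemma le_Bclosure m c : is_Bclosure tau m c -> leF m c.
Proof. intros Hc x; apply (proj2 (Hc x)); intros a [nu [_ [Hle <-]]]; apply Hle. Qed.

Lemma Bclosure_le_closed m c nu :
  is_Bclosure tau m c -> Bclosed tau nu -> leF m nu -> leF c nu.
Proof. intros Hc Hnu Hle x; apply (proj1 (Hc x)); eauto. Qed.

(* The complement of the closure is the join of the complements of the closed supersets. *)
Lemma Bclosure_closed m c : is_Btopology tau -> is_Bclosure tau m c -> Bclosed tau c.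
Proof.
  intros [_ [Hjoin _]] Hc.
  apply Hjoin with
    (S := fun k => exists nu, Bclosed tau nu /\ leF m nu /\ k = fun y => negB (nu y)).
  - intros k [nu [Hnu [_ ->]]]; exact Hnu.
  - intro x; apply isLUB_atoms; intros b Hb.
    rewrite leB_negB_atom, (is_Bclosure_atoms m c x b Hc Hb) by exact Hb; split.
    + intro H; apply not_all_ex_not in H as [nu H].
      apply imply_to_and in H as [Hnu H]; apply imply_to_and in H as [Hle H].
      exists (negB (nu x)); split; [exists (fun y => negB (nu y)); eauto |].
      apply leB_negB_atom; assumption.
    + intros [a [[k [[nu [Hnu [Hle ->]]] <-]] Hba]] H.
      apply leB_negB_atom in Hba; auto.
Qed.

End Levels.

Section LevelTopologies.
Context {X : Type} (tau : (X -> B4) -> Prop).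
Hypothesis tau_top : is_Btopology tau.

Lemma Tregular_cut_of_Bregular b : Bregular tau -> atom b -> Tregular (cut tau b).
Proof.
  intros Hreg Hb x N [V [[l [Hl HV]] [Vx VN]]].
  destruct (proj1 (level_join _ _ _ x Hb (Hreg l Hl)) (proj1 (HV x) Vx))
    as [m [[Hm [c [Hc Hcl]]] Hbm]].
  exists (level c b); split; [| split].
  - exists (fun y => negB (c y)); split; [exact (Bclosure_closed tau m c tau_top Hc) |].
    intro y; unfold level; rewrite leB_negB_atom by exact Hb; reflexivity.
  - exists (level m b); split; [exact (cut_level tau m b Hm) | split; [exact Hbm |]].
    intros y Hy; eapply leB_trans; [exact Hy | exact (le_Bclosure tau m c Hc y)].
  - intros y Hy; apply VN, HV; eapply leB_trans; [exact Hy | exact (Hcl y)].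
Qed.

(* With x ∈ k[b] ⊆ C and k'[b] the complement of C, the closed set ¬(k' ∧ b) bounds the
   closure of k ∧ b at level b, and the closed constant b kills its level ¬b. *)
Lemma regular_open_below_of_Tregular_cut b l x :
  atom b -> Tregular (cut tau b) -> tau l -> leB b (l x) ->
  exists m, (tau m /\ exists c, is_Bclosure tau m c /\ leF c l) /\ leB b (m x).
Proof.
  destruct tau_top as [Hconst [_ Hmeet]].
  intros Hb Treg Hl Hbl.
  destruct (Treg x (level l b)) as [C [[k' [Hk' HC]] [[V [[k [Hk HV]] [Vx VC]]] Cl]]].
  { exists (level l b); split; [exact (cut_level tau l b Hl) | split; auto]. }
  set (m := fun y => meetB (k y) b).
  set (nu := fun y => negB (meetB (k' y) b)).
  assert (Hnu : Bclosed tau nu).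
  { unfold Bclosed, nu.
    replace (fun y => negB (negB (meetB (k' y) b))) with (fun y => meetB (k' y) b)
      by (apply functional_extensionality; intro; rewrite negB_involutive; reflexivity).
    apply Hmeet; auto. }
  assert (Hm_nu : leF m nu).
  { intro y; apply leB_atoms; intros a Ha Ham; unfold m in Ham.
    apply leB_meetB_atom in Ham as [Hak Hab]; [| exact Ha].
    assert (a = b) as -> by (destruct Ha as [-> | ->], Hb as [-> | ->]; leB_cases).
    unfold nu; rewrite leB_negB_atom, leB_meetB_atom by exact Hb.
    intros [Hk'y _]; apply (proj2 (HC y) Hk'y), VC, HV, Hak. }
  exists m; split; [split; [apply Hmeet; auto |] |].
  - exists (Bclosure tau m); split; [apply Bclosure_spec |].
    intro y; apply (leB_atoms (Bclosure tau m y)); intros a Ha Hac.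
    pose proof (Bclosure_le_closed tau m _ nu (Bclosure_spec tau m) Hnu Hm_nu y) as Hc_nu.
    pose proof (Bclosure_le_closed tau m _ (fun _ => b) (Bclosure_spec tau m)
                  (Hconst (negB b)) (fun z => leB_meetB_r (k z) b) y) as Hc_b.
    assert (a = b) as ->
      by (destruct Ha as [-> | ->], Hb as [-> | ->], (leB_trans _ _ _ Hac Hc_b); leB_cases).
    apply Cl; apply NNPP; intro HCy.
    apply (proj1 (leB_negB_atom b _ Hb) (leB_trans _ _ _ Hac Hc_nu)), leB_meetB_atom;
      [exact Hb | split; [apply HC, HCy | apply leB_refl]].
  - apply leB_meetB_atom; [exact Hb | split; [apply HV, Vx | apply leB_refl]].
Qed.

Lemma Bregular_of_Tregular_cuts :
  Tregular (cut tau Btt) -> Tregular (cut tau Bff) -> Bregular tau.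
Proof.
  intros Htt Hff l Hl x; apply isLUB_atoms; intros b Hb; split.
  - intro Hbl.
    assert (Treg : Tregular (cut tau b)) by (destruct Hb as [-> | ->]; assumption).
    destruct (regular_open_below_of_Tregular_cut b l x Hb Treg Hl Hbl) as [m [Hm Hbm]].
    exists (m x); split; [exists m; auto | exact Hbm].
  - intros [a [[m [[_ [c [Hc Hcl]]] <-]] Hbm]].
    eapply leB_trans; [exact Hbm |].
    eapply leB_trans; [exact (le_Bclosure tau m c Hc x) | exact (Hcl x)].
Qed.

Lemma Bregular_iff_Tregular_cuts :
  Bregular tau <-> Tregular (cut tau Btt) /\ Tregular (cut tau Bff).
Proof.
  split.
  - intro Hreg; split; apply Tregular_cut_of_Bregular; auto using atom_tt, atom_ff.
  - intros [Htt Hff]; exact (Bregular_of_Tregular_cuts Htt Hff).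
Qed.

End LevelTopologies.

Section Omega.
Context {X : Type} (T : (X -> Prop) -> Prop).
Hypothesis T_top : is_topology T.

Lemma topology_const (P : Prop) : T (fun _ => P).
Proof.
  destruct T_top as [Hempty [Hfull _]].
  destruct (classic P) as [HP | HP]; [replace (fun _ : X => P) with (fun _ : X => True)
                                     | replace (fun _ : X => P) with (fun _ : X => False)];
    auto; apply pred_ext; tauto.
Qed.

Lemma omega_level l b : atom b -> omega T l -> T (level l b).
Proof. intros [-> | ->] [Htt Hff]; assumption. Qed.

Lemma omega_of_levels l : (forall b, atom b -> T (level l b)) -> omega T l.
Proof. intro H; split; apply H; auto using atom_tt, atom_ff. Qed.

Lemma omega_Btopology : is_Btopology (omega T).
Proof.
  destruct T_top as [_ [_ [Hunion Hinter]]].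
  split; [| split].
  - intro a; apply omega_of_levels; intros b _; exact (topology_const (leB b a)).
  - intros S mu HS J; apply omega_of_levels; intros b Hb.
    replace (level mu b) with
      (fun x => exists U, (exists l, S l /\ U = level l b) /\ U x).
    + apply Hunion; intros U [l [Hl ->]]; apply omega_level; auto.
    + apply pred_ext; intro x; unfold level at 1; rewrite (level_join S mu b x Hb J); split.
      * intros [U [[l [Hl ->]] Hx]]; eauto.
      * intros [l [Hl Hx]]; exists (level l b); eauto.
  - intros l m Hl Hm; apply omega_of_levels; intros b Hb.
    replace (level (fun x => meetB (l x) (m x)) b) with (fun x => level l b x /\ level m b x).
    + apply Hinter; apply omega_level; auto.
    + apply pred_ext; intro x; unfold level; rewrite leB_meetB_atom by exact Hb; reflexivity.
Qed.

Lemma cut_omega b : atom b -> cut (omega T) b = T.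
Proof.
  intro Hb; apply functional_extensionality; intro U; apply propositional_extensionality; split.
  - intros [l [Hl HU]]; replace U with (level l b); [apply omega_level; auto |].
    apply pred_ext; intro x; symmetry; apply HU.
  - intro HU; destruct Hb as [-> | ->].
    + exists (fun y => B4_of_atoms (U y) False).
      assert (Htt : level (fun y => B4_of_atoms (U y) False) Btt = U)
        by (apply pred_ext; intro; apply leB_tt_B4_of_atoms).
      assert (Hff : level (fun y => B4_of_atoms (U y) False) Bff = fun _ => False)
        by (apply pred_ext; intro; apply leB_ff_B4_of_atoms).
      split; [split; [rewrite Htt | rewrite Hff; apply topology_const] | rewrite Htt]; tauto.
    + exists (fun y => B4_of_atoms False (U y)).
      assert (Htt : level (fun y => B4_of_atoms False (U y)) Btt = fun _ => False)
        by (apply pred_ext; intro; apply leB_tt_B4_of_atoms).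
      assert (Hff : level (fun y => B4_of_atoms False (U y)) Bff = U)
        by (apply pred_ext; intro; apply leB_ff_B4_of_atoms).
      split; [split; [rewrite Htt; apply topology_const | rewrite Hff] | rewrite Hff]; tauto.
Qed.

End Omega.

Theorem mainTheorem17 :
  (forall (X : Type) (tau : (X -> B4) -> Prop),
      is_Btopology tau ->
      (Bregular tau <-> (Tregular (cut tau Btt) /\ Tregular (cut tau Bff)))) /\
  (forall (X : Type) (T : (X -> Prop) -> Prop),
      is_topology T ->
      (Bregular (omega T) <-> Tregular T)).
Proof.
  split.
  - intros X tau Htau; exact (Bregular_iff_Tregular_cuts tau Htau).
  - intros X T HT.
    rewrite (Bregular_iff_Tregular_cuts (omega T) (omega_Btopology T HT)).
    rewrite !(cut_omega T HT) by auto using atom_tt, atom_ff.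
    tauto.
Qed.
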